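(* Let $A,B,C$ be the observer canonical realization (described in the context) of a plant $b(s)/a(s)$ that is stable (i.e. $A$ is Hurwitz) and has positive DC gain. Then the first exit map $\psi_+(\xi;1)$ is defined for every $\xi\in\mathbb{R}^n$.
   Context: The plant transfer function is $\frac{b(s)}{a(s)}=\frac{b_{n-1}s^{n-1}+\dots+b_0}{s^n+a_{n-1}s^{n-1}+\dots+a_0}$ with real coefficients. Its observer canonical realization is: $A$ is the $n\times n$ matrix with $A_{i+1,i}=1$ for $i=1,\dots,n-1$, last column $(-a_0,\dots,-a_{n-1})^T$, other entries zero; $B=(b_0,\dots,b_{n-1})^T$; $C=(0,\dots,0,1)$. The DC gain is $b_0/a_0$. The first exit time is $\tau_+(\xi)=\inf\{t>0: Cx(t)<0\}$ where $\dot x=Ax-B$, $x(0)=\xi$; the first exit map is $\psi_+(\xi;1)=x(\tau_+(\xi))$, defined at every point whose trajectory crosses the hyperplane $\{Cx=0\}$ in finite time. *)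

From HB Require Import structures.
From mathcomp Require Import all_boot all_order all_algebra.
From mathcomp Require Import all_classical all_reals all_analysis.
From mathcomp Require Import complex.
Set Implicit Arguments. Unset Strict Implicit. Unset Printing Implicit Defensive.
Import Order.TTheory GRing.Theory Num.Theory.
Import numFieldNormedType.Exports.
Local Open Scope ring_scope.

(* Observer canonical realization of b(s)/a(s), with n = m.+1 states,
   a(s) = s^n + a_{n-1} s^{n-1} + ... + a_0 (coefficients a i, i < n),
   b(s) = b_{n-1} s^{n-1} + ... + b_0 (coefficients b i, i < n).
   Indices are 0-based: paper's A_{i+1,i} = 1 becomes A (i+1) i = 1,
   last column is (-a_0, ..., -a_{n-1})^T. *)
Definition obsA (R : realType) (m : nat) (a : 'I_m.+1 -> R) : 'M[R]_m.+1 :=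
  \matrix_(i, j) (if j == ord_max then - a i
                  else if val i == (val j).+1 then 1 else 0).

Definition obsB (R : realType) (m : nat) (b : 'I_m.+1 -> R) : 'cV[R]_m.+1 :=
  \col_i b i.

Definition obsC (R : realType) (m : nat) : 'rV[R]_m.+1 :=
  \row_j (if j == ord_max then 1 else 0).

Definition hurwitz (R : realType) (m : nat) (A : 'M[R]_m.+1) : Prop :=
  forall z : R[i], root (char_poly (map_mx (fun x : R => (x%:C)%C) A)) z ->
    complex.Re z < 0.

Definition is_traj (R : realType) (m : nat) (A : 'M[R]_m.+1) (B : 'cV[R]_m.+1)
  (xi : 'cV[R]_m.+1) (x : R -> 'cV[R]_m.+1) : Prop :=
  x 0 = xi /\ forall t : R, is_derive t 1 x (A *m x t - B).

(* psi_+(xi;1) is defined: the set {t > 0 | C x(t) < 0} is nonempty,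
   so tau_+(xi) = inf of it is finite. *)
Definition exit_defined (R : realType) (m : nat) (A : 'M[R]_m.+1)
  (B : 'cV[R]_m.+1) (C : 'rV[R]_m.+1) (xi : 'cV[R]_m.+1) : Prop :=
  forall x, is_traj A B xi x -> exists t : R, 0 < t /\ (C *m x t) 0 0 < 0.

From HB Require Import structures.
From mathcomp Require Import all_boot all_order all_algebra.
From mathcomp Require Import all_classical all_reals all_analysis.
From mathcomp Require Import complex ring lra.
Import Order.TTheory GRing.Theory Num.Theory.
Import numFieldNormedType.Exports.
Local Open Scope ring_scope.
Local Open Scope classical_set_scope.

(* Along a solution of x' = A x - B, the derivative of r x'(t) is (r A) x'(t).
   Over C the characteristic polynomial of A splits as prod_l (X - l), and
   c prod_l (A - l) = 0 by Cayley-Hamilton.  Peeling off one factor at a time,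
   a Lyapunov estimate for the damped rotation u' = Re l u - Im l v + o(1),
   v' = Im l u + Re l v + o(1) (with Re l < 0) shows c x'(t) -> 0 for every
   complex row c, i.e. x'(t) -> 0.  In observer form the first entry of x' is
   -a_0 C x - b_0, so C x(t) -> -b_0/a_0 < 0 and the output becomes negative. *)

Section Decay.
Context {R : realType}.

Lemma gronwall_le (V dV : R -> R) (k e T : R) : 0 < k ->
  (forall t : R, is_derive t 1 V (dV t)) ->
  (forall t, T <= t -> dV t <= - k * V t + k * e) ->
  forall t, T <= t -> V t <= e + expR (k * (T - t)) * (V T - e).
Proof.
move=> k0 V' dV_le t Tt.
pose W := (expR \o ( *:%R k)) * (V - cst e).
have W' (s : R) : is_derive s 1 W (expR (k * s) * (dV s - k * (e - V s))).
  apply: is_derive_eq.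
  rewrite /= subr0 /GRing.scale /= mulr1.
  by rewrite (_ : (V - cst e) s = V s - e) //; ring.
have [c /andP[Tc _]] := MVT_segment Tt (fun s _ => W' s)
  (derivable_within_continuous (fun s _ => @ex_derive _ _ _ _ _ _ _ (W' s))).
have Wc_le0 : expR (k * c) * (dV c - k * (e - V c)) <= 0.
  rewrite pmulr_rle0 ?expR_gt0 // subr_le0.
  by have := dV_le c Tc; lra.
move=> /eqP; rewrite subr_eq => /eqP WtT.
have le_W : expR (k * t) * (V t - e) <= expR (k * T) * (V T - e).
  by rewrite -[_ <= _]/(W t <= W T) WtT gerDr mulr_le0_ge0 // subr_ge0.
have eT : expR (k * T) = expR (k * t) * expR (k * (T - t)).
  by rewrite -expRD; congr expR; ring.
rewrite eT -mulrA ler_pM2l ?expR_gt0 // in le_W.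
by rewrite -lerBlDl.
Qed.

Lemma cvg_expR_decay (k T : R) : 0 < k -> expR (k * (T - t)) @[t --> +oo] --> 0.
Proof.
move=> k0.
have kt_oo : k * (t - T) @[t --> +oo] --> +oo.
  apply/cvgryPge => M; near=> t.
  rewrite -ler_pdivrMl // lerBrDr.
  by near: t; apply: nbhs_pinfty_ge; rewrite num_real.
have -> : (fun t => expR (k * (T - t))) =
          (fun y => expR (- y)) \o (fun t => k * (t - T)).
  by apply/funext => t /=; rewrite -mulrN opprB.
exact: cvg_comp kt_oo (@cvgr_expR R).
Unshelve. all: end_near. Qed.

Lemma cvg0_of_deriv_le (V dV h : R -> R) (k : R) : 0 < k ->
  (forall t, 0 <= V t) -> (forall t : R, is_derive t 1 V (dV t)) ->
  (forall t, dV t <= - k * V t + h t) -> h @ +oo --> 0 ->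
  V @ +oo --> 0.
Proof.
move=> k0 V_ge0 V' dV_le h0; apply/cvgr0Pnorm_lt => e e0.
have [T [_ hT]] : \forall t \near +oo, h t <= k * (e / 2).
  have /(cvgr0_norm_le _ h0) : 0 < k * (e / 2) by rewrite mulr_gt0 ?divr_gt0.
  by apply: filterS => t /(le_trans (ler_norm _)).
have V_le : forall t, T + 1 <= t ->
    V t <= e / 2 + expR (k * (T + 1 - t)) * (V (T + 1) - e / 2).
  apply: gronwall_le => // t Tt.
  by rewrite (le_trans (dV_le t)) // lerD2l hT // (lt_le_trans _ Tt) ?ltrDl.
have bound_cvg : e / 2 + expR (k * (T + 1 - t)) * (V (T + 1) - e / 2)
    @[t --> +oo] --> e / 2 + 0 * (V (T + 1) - e / 2).
  apply: cvgD; first exact: cvg_cst.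
  apply: cvgM; first exact: cvg_expR_decay.
  exact: cvg_cst.
rewrite mul0r addr0 in bound_cvg.
have lt_e : e / 2 < e by lra.
near=> t; rewrite ger0_norm // (le_lt_trans (V_le t _)) //.
by near: t; exact: cvgr_lt _ bound_cvg _ lt_e.
Unshelve. all: end_near. Qed.

Lemma cvg0_of_sqr_le (T : Type) (F : set_system T) (FF : Filter F)
    (u V : T -> R) :
  (forall t, u t ^+ 2 <= V t) -> V @ F --> 0 -> u @ F --> 0.
Proof.
move=> uV V0; apply/cvgr0Pnorm_lt => e e0.
have /(cvgr0_norm_lt _ V0) : 0 < e ^+ 2 by rewrite exprn_gt0.
apply: filterS => t /(le_lt_trans (ler_norm _)) /(le_lt_trans (uV t)).
by rewrite -real_normK ?num_real // (ltr_sqr (normr_ge0 _) (ltW e0)).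
Qed.

Lemma damped_rotation_cvg0 (u v f1 f2 : R -> R) (al be : R) : al < 0 ->
  (forall t : R, is_derive t 1 u (al * u t - be * v t + f1 t)) ->
  (forall t : R, is_derive t 1 v (be * u t + al * v t + f2 t)) ->
  f1 @ +oo --> 0 -> f2 @ +oo --> 0 -> u @ +oo --> 0 /\ v @ +oo --> 0.
Proof.
move=> al0 u' v' f1_0 f2_0; pose k := - al.
have k0 : 0 < k by rewrite oppr_gt0.
pose V t := u t ^+ 2 + v t ^+ 2.
pose dV t :=
  2 * (u t * (al * u t - be * v t + f1 t) + v t * (be * u t + al * v t + f2 t)).
pose h t := (f1 t * f1 t + f2 t * f2 t) / k.
have V' (t : R) : is_derive t 1 V (dV t).
  by apply: is_derive_eq; rewrite /dV /GRing.scale /=; ring.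
have dV_le t : dV t <= - k * V t + h t.
  have kh : k * h t = f1 t * f1 t + f2 t * f2 t by rewrite mulrC divfK ?gt_eqF.
  (* 2 u f <= k u^2 + f^2 / k *)
  have := sqr_ge0 (k * u t - f1 t); have := sqr_ge0 (k * v t - f2 t).
  rewrite /dV /V /k; rewrite /k in kh k0; nra.
have h0 : h @ +oo --> 0.
  rewrite -(mul0r k^-1); apply: cvgM; last exact: cvg_cst.
  by rewrite -(addr0 0) -{1 2}(mulr0 0); apply: cvgD; apply: cvgM.
have V0 : V @ +oo --> 0.
  apply: cvg0_of_deriv_le k0 _ V' dV_le h0 => t.
  by rewrite addr_ge0 ?sqr_ge0.
by split; apply: cvg0_of_sqr_le V0 => t; rewrite /V ?lerDl ?lerDr sqr_ge0.
Qed.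
End Decay.

Section ComplexRows.
Context {R : rcfType} {n : nat}.
Implicit Types (c : 'rV[R[i]]_n) (A : 'M[R]_n) (l : R[i]).

Local Notation ReM := (map_mx (@complex.Re R)).
Local Notation ImM := (map_mx (@complex.Im R)).
Local Notation toC := (map_mx (real_complex R)).

Lemma Re_mulmx_real c A : ReM (c *m toC A) = ReM c *m A.
Proof.
apply/matrixP => i j; rewrite !mxE raddf_sum; apply: eq_bigr => k _.
by rewrite !mxE; case: (c i k) => ? ? /=; rewrite mulr0 subr0.
Qed.

Lemma Im_mulmx_real c A : ImM (c *m toC A) = ImM c *m A.
Proof.
apply/matrixP => i j; rewrite !mxE raddf_sum; apply: eq_bigr => k _.
by rewrite !mxE; case: (c i k) => ? ? /=; rewrite mulr0 add0r.
Qed.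

Lemma Re_mulmx_sub_scalar c A l :
  ReM (c *m (toC A - l%:M)) =
  ReM c *m A - complex.Re l *: ReM c + complex.Im l *: ImM c.
Proof.
rewrite mulmxBr mul_mx_scalar -Re_mulmx_real -addrA.
apply/matrixP => i j; rewrite !mxE raddfB; congr (_ + _).
by case: l => ? ?; case: (c i j) => ? ? /=; ring.
Qed.

Lemma Im_mulmx_sub_scalar c A l :
  ImM (c *m (toC A - l%:M)) =
  ImM c *m A - complex.Im l *: ReM c - complex.Re l *: ImM c.
Proof.
rewrite mulmxBr mul_mx_scalar -Im_mulmx_real -addrA.
apply/matrixP => i j; rewrite !mxE raddfB; congr (_ + _).
by case: l => ? ?; case: (c i j) => ? ? /=; ring.
Qed.
End ComplexRows.

Lemma is_derive_mulmx_entry {R : realType} {p q r : nat} (w : 'M[R]_(p, q)) i j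
    {x : R -> 'M[R]_(q, r)} {dx : 'M[R]_(q, r)} {t : R} :
  is_derive t 1 x dx -> is_derive t 1 (fun s => (w *m x s) i j) ((w *m dx) i j).
Proof.
move=> x'; have x_derivable : derivable x t 1 := @ex_derive _ _ _ _ _ _ _ x'.
have entry_derivable := (derivable_mxP x t 1).1 x_derivable.
have dx_mx := derive_mx x_derivable; rewrite derive_val in dx_mx.
have dx_entry k : is_derive t 1 (fun s => x s k j) (dx k j).
  apply: DeriveDef; first exact: entry_derivable.
  by rewrite dx_mx mxE.
have := is_derive_sum (fun k => is_deriveZ (w i k) (dx_entry k)).
rewrite fct_sumE mxE; congr is_derive; apply/funext => s.
by rewrite mxE.
Qed.

Definition vel {R : realType} {n : nat} (A : 'M[R]_n) (B : 'cV[R]_n)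
  (x : R -> 'cV[R]_n) (r : 'rV[R]_n) (t : R) : R := (r *m (A *m x t - B)) 0 0.

Section Velocity.
Context {R : realType} {n : nat} {A : 'M[R]_n} {B : 'cV[R]_n} {x : R -> 'cV[R]_n}.
Hypothesis x' : forall t : R, is_derive t 1 x (A *m x t - B).

Implicit Types (r p q : 'rV[R]_n) (t : R).

Local Notation vel := (vel A B x).

Lemma velD r1 r2 t : vel (r1 + r2) t = vel r1 t + vel r2 t.
Proof. by rewrite /vel mulmxDl mxE. Qed.

Lemma velN r t : vel (- r) t = - vel r t.
Proof. by rewrite /vel mulNmx mxE. Qed.

Lemma velZ k r t : vel (k *: r) t = k * vel r t.
Proof. by rewrite /vel -scalemxAl mxE. Qed.

Lemma is_derive_vel r t : is_derive t 1 (vel r) (vel (r *m A) t).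
Proof.
have := is_deriveB (is_derive_mulmx_entry (r *m A) 0 0 (x' t))
  (is_derive_cst ((r *m B) 0 0) t 1).
rewrite subr0; congr is_derive; apply/funext => s.
by rewrite /vel mulmxBr mulmxA [RHS]mxE [X in _ = _ + X]mxE !fctE.
Qed.

Lemma vel_rotation_cvg0 {al be : R} {p q} : al < 0 ->
  vel (p *m A - al *: p + be *: q) @ +oo --> 0 ->
  vel (q *m A - be *: p - al *: q) @ +oo --> 0 ->
  vel p @ +oo --> 0 /\ vel q @ +oo --> 0.
Proof.
move=> al0 f1_0 f2_0.
apply: (damped_rotation_cvg0 (vel p) (vel q) _ _ al be al0 _ _ f1_0 f2_0) => t;
  by apply: is_derive_eq (is_derive_vel _ t) _; rewrite !(velD, velN, velZ); ring.
Qed.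
End Velocity.

Definition vel_vanishes {R : realType} {n : nat} (A : 'M[R]_n) (B : 'cV[R]_n)
    (x : R -> 'cV[R]_n) (c : 'rV[R[i]]_n) : Prop :=
  vel A B x (map_mx (@complex.Re R) c) @ +oo --> 0 /\
  vel A B x (map_mx (@complex.Im R) c) @ +oo --> 0.

Section Hurwitz.
Context {R : realType} {m : nat}.
Context {A : 'M[R]_m.+1} {B : 'cV[R]_m.+1} {x : R -> 'cV[R]_m.+1}.
Hypothesis x' : forall t : R, is_derive t 1 x (A *m x t - B).

Local Notation vel := (vel A B x).
Local Notation toC := (map_mx (real_complex R)).
Local Notation vel_vanishes := (vel_vanishes A B x).

Lemma vel_vanishes_mul_sub (l : R[i]) c : complex.Re l < 0 ->
  vel_vanishes (c *m (toC A - l%:M)) -> vel_vanishes c.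
Proof.
rewrite /vel_vanishes Re_mulmx_sub_scalar Im_mulmx_sub_scalar => l0 [f1_0 f2_0].
exact: (vel_rotation_cvg0 x' l0 f1_0 f2_0).
Qed.

Lemma vel_vanishes_of_prod (s : seq R[i]) : {in s, forall z, complex.Re z < 0} ->
  (forall c,
     vel_vanishes (c *m horner_mx (toC A) (\prod_(z <- s) ('X - z%:P)))) ->
  forall c, vel_vanishes c.
Proof.
elim: s => [|z s IH] s_neg P_vanishes.
  by move=> c; move: (P_vanishes c); rewrite big_nil rmorph1 mulmx1.
apply: IH => [w ws|d]; first by apply: s_neg; rewrite inE ws orbT.
apply: (vel_vanishes_mul_sub z _ (s_neg z (mem_head _ _))).
move: (P_vanishes d).
rewrite big_cons mulrC rmorphM rmorphB /= horner_mx_X horner_mx_C.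
by rewrite -mulmxE mulmxA.
Qed.

Lemma velocity_cvg0 : hurwitz A -> forall r, vel r @ +oo --> 0.
Proof.
move=> A_hurwitz r.
have [rs char_rs] := closed_field_poly_normal (char_poly (toC A)).
rewrite (monicP (char_poly_monic _)) scale1r in char_rs.
have vel0 : vel 0 = cst 0.
  by apply/funext => t; rewrite /vel mul0mx mxE.
have Re0 : map_mx (@complex.Re R) 0 = 0 :> 'rV_m.+1.
  by apply/matrixP => i j; rewrite !mxE.
have Im0 : map_mx (@complex.Im R) 0 = 0 :> 'rV_m.+1.
  by apply/matrixP => i j; rewrite !mxE.
have [] := vel_vanishes_of_prod rs _ _ (toC r).
- by move=> z zs; apply: A_hurwitz; rewrite char_rs root_prod_XsubC.
- move=> c; rewrite -char_rs Cayley_Hamilton mulmx0 /vel_vanishes Re0 Im0 vel0.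
  by split; exact: cvg_cst.
by rewrite (_ : map_mx _ (toC r) = r) //; apply/matrixP => i j; rewrite !mxE.
Qed.
End Hurwitz.

Lemma obs_vel_row0 {R : realType} {m : nat} (a b : 'I_m.+1 -> R)
    (y : 'cV[R]_m.+1) :
  ((delta_mx 0 0 : 'rV_m.+1) *m (obsA a *m y - obsB b)) 0 0 =
  - a ord0 * (obsC R m *m y) 0 0 - b ord0.
Proof.
rewrite mulmxBr -!rowE !mxE; congr (_ - _).
rewrite (bigD1 ord_max) // big1 => [|j /negbTE nj]; last by rewrite mxE nj mul0r.
rewrite (bigD1 ord_max) // big1 => [|j /negbTE nj]; last by rewrite mxE nj mul0r.
by rewrite !mxE !eqxx /= !addr0 mul1r (_ : 0 = ord0) //; apply: val_inj.
Qed.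

Theorem mainTheorem2 (R : realType) (m : nat) (a b : 'I_m.+1 -> R) :
  hurwitz (obsA a) -> 0 < b ord0 / a ord0 ->
  forall xi : 'cV[R]_m.+1, exit_defined (obsA a) (obsB b) (obsC R m) xi.
Proof.
move=> A_hurwitz dc_gain_gt0 xi x [_ x'].
have a0_neq0 : a ord0 != 0.
  by apply: contraTneq dc_gain_gt0 => ->; rewrite invr0 mulr0 ltxx.
have vel_row0 := velocity_cvg0 x' A_hurwitz (delta_mx 0 0).
have Cx_cvg : (obsC R m *m x t) 0 0 @[t --> +oo] --> - (b ord0 / a ord0).
  have -> : (fun t => (obsC R m *m x t) 0 0) =
            (fun t => - (vel (obsA a) (obsB b) x 'e_0 t + b ord0) / a ord0).
    by apply/funext => t; rewrite /vel obs_vel_row0; field.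
  rewrite -mulNr -{2}(add0r (b ord0)); apply: cvgM; last exact: cvg_cst.
  by apply: cvgN; apply: cvgD; [exact: vel_row0 | exact: cvg_cst].
have Cx_lim_neg : - (b ord0 / a ord0) < 0 by rewrite oppr_lt0.
have [M [_ CxM]] := cvgr_lt _ Cx_cvg _ Cx_lim_neg.
exists (Num.max 0 M + 1); split.
  by rewrite ltr_pwDr // le_max lexx.
by apply: CxM; rewrite ltr_pwDr // le_max lexx orbT.
Qed.
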